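(* Assume the standing setup, fix $g=g_i$ and $\ell=\ell_i$, and assume $v_N(a)$ is defined for every coefficient $a$ of the $g$-expansion of $f$. Let $p$ be a prime divisor of $N$ and $\phi$ a monic irreducible factor of $g$ in $\mathbb Z_p[x]$. Then: (1) the length of $N_\phi^-(f)$ equals the length of $N_g^-(f)$ (both equal $\ell$); (2) for every slope $-\lambda$ of $N_\phi^-(f)$ and every $\mathfrak p\in\mathcal P_{\phi,\lambda}$, one has $v_{\mathfrak p}(g(\theta))=e(\mathfrak p/p)\lambda$.
   Context: Standing setup: $f\in\mathbb Z[x]$ monic irreducible of degree $n>1$, $\theta\in\overline{\mathbb Q}$ a root, $K=\mathbb Q(\theta)$, $\mathbb Z_K$ its ring of integers. $N>1$ is an integer all of whose prime divisors are $>n$. Bar denotes reduction mod $N$, $\operatorname{red}_p$ reduction mod a prime $p$ (on $\mathbb Z[x]$ or $\mathbb Z_p[x]$). $g_1,\dots,g_m\in\mathbb Z[x]$ are monic of positive degree and $\ell_1,\dots,\ell_m$ positive integers with $f\equiv g_1^{\ell_1}\cdots g_m^{\ell_m}\pmod N$, such that for every prime $p\mid N$ the polynomials $\operatorname{red}_p(g_i)$ are squarefree and pairwise coprime in $\mathbb F_p[x]$. $N$-adic value: for $a\in\mathbb Z\setminus\{0\}$, $v_N(a)$ is defined if $a=N^kb$ with $k\ge0$, $\gcd(b,N)=1$, and then $v_N(a)=k$; $v_N(0)=\infty$. $g$-expansion $f=\sum a_i g^i$ ($\deg a_i<\deg g$), $u_i=v_N(a_i)$; $N_g(f)$ is the lower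 convex hull of the points $(i,u_i)$, $u_i<\infty$; $N_g^-(f)$ its part of negative slope; length = abscissa of the right endpoint. $p$-adic polygons: $v_p$ is the $p$-adic valuation on $\overline{\mathbb Q}_p$ with $v_p(p)=1$, extended to $\mathbb Z_p[x]$ by minimum over coefficients. For monic $\phi\in\mathbb Z_p[x]$ irreducible mod $p$, write $f=\sum b_i\phi^i$ with $\deg b_i<\deg\phi$; $N_\phi(f)$ is the lower convex hull of the points $(i,v_p(b_i))$, and $N_\phi^-(f)$ its part of negative slope. For each prime $\mathfrak p$ of $\mathbb Z_K$ above $p$, fix a topological embedding $\iota_{\mathfrak p}\colon K\hookrightarrow\overline{\mathbb Q}_p$ (for the $\mathfrak p$-adic topology), so that $v_{\mathfrak p}(\alpha)=e(\mathfrak p/p)v_p(\iota_{\mathfrak p}(\alpha))$, with $e(\mathfrak p/p)$ the ramification index. $\mathcal P_\phi=\{\mathfrak p\mid p: v_p(\phi(\iota_{\mathfrak p}(\theta)))>0\}$ and $\mathcal P_{\phi,\lambda}=\{\mathfrak p\in\mathcal P_\phi: v_p(\phi(\iota_{\mathfrak p}(\theta)))=\lambda\}$. *)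

From HB Require Import structures.
From mathcomp Require Import all_boot all_order all_algebra.
Set Implicit Arguments. Unset Strict Implicit. Unset Printing Implicit Defensive.
Import Order.TTheory GRing.Theory Num.Theory.
Local Open Scope ring_scope.

Definition segval (P Q : nat * rat) (x : rat) : rat :=
  if P.1 == Q.1 then P.2
  else ((Q.1%:R - x) * P.2 + (x - P.1%:R) * Q.2) / (Q.1%:R - P.1%:R).

(* (x, y) lies on the lower convex hull of pts: y is the least ordinate
   of the convex hull of pts above abscissa x (the lowest point of the
   convex hull of a finite planar set over x lies on a segment joining
   two of the points). *)
Definition on_hull (pts : seq (nat * rat)) (x y : rat) : Prop :=
  (exists P Q, [/\ P \in pts, Q \in pts, (P.1%:R <= x <= Q.1%:R)
                 & y = segval P Q x]) /\
  (forall P Q, P \in pts -> Q \in pts -> P.1%:R <= x <= Q.1%:R ->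
     y <= segval P Q x).

Definition is_slope (pts : seq (nat * rat)) (mu : rat) : Prop :=
  exists x1 x2 y1, x1 < x2 /\
    forall x, x1 <= x <= x2 -> on_hull pts x (y1 + mu * (x - x1)).

(* L is the length (abscissa of the right end point) of the part N^- of
   negative slope of the polygon: the polygon is strictly decreasing
   left of L and non-decreasing right of L. *)
Definition negpart_length (pts : seq (nat * rat)) (L : rat) : Prop :=
  (exists yL, on_hull pts L yL) /\
  (forall x1 x2 y1 y2, on_hull pts x1 y1 -> on_hull pts x2 y2 ->
     x1 < x2 -> x2 <= L -> y2 < y1) /\
  (forall x1 x2 y1 y2, on_hull pts x1 y1 -> on_hull pts x2 y2 ->
     L <= x1 -> x1 < x2 -> y1 <= y2).

(* the points (i, u_i), i < n, with u_i < oo *)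
Definition pts_of (n : nat) (u : nat -> option rat) : seq (nat * rat) :=
  pmap (fun i => omap (fun r => (i, r)) (u i)) (iota 0 n).

Definition is_expansion (R : nzRingType) (f phi : {poly R})
    (a : seq {poly R}) : Prop :=
  f = \sum_(i < size a) a`_i * phi ^+ i /\
  forall i, (i < size a)%N -> leq (size a`_i).+1 (size phi).

Definition vN_defined (N : nat) (c : int) : Prop :=
  c = 0 \/ exists k b, `|c|%N = (N ^ k * b)%N /\ coprime b N.

Fixpoint vN_rec (N fuel m : nat) : nat :=
  if fuel is f.+1 then
    if (0 < m)%N && (N %| m)%N then (vN_rec N f (m %/ N)).+1 else 0%N
  else 0%N.

(* the exponent k of the largest power N^k dividing m (for m > 0, N > 1);
   it is the k of the definition when v_N(m) is defined *)
Definition vN (N m : nat) : nat := vN_rec N m m.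

Definition vN_poly (N : nat) (a : {poly int}) : rat :=
  \big[Num.min/ (vN N `|lead_coef a|)%:R]_(c <- a | c != 0)
     (vN N `|c|)%:R.

Definition uN (N : nat) (a : seq {poly int}) (i : nat) : option rat :=
  if a`_i == 0 then None else Some (vN_poly N a`_i).

(* (Om, v, Zp) is (an isomorphic copy of) \bar Q_p with the p-adic
   valuation v_p (v(p) = 1; v is only meaningful on nonzero elements,
   v(0) = oo by convention), and Zp the ring of p-adic integers inside it:
   Zp is a subring on which v >= 0, complete for v, in which Z is dense,
   and Om is an algebraic closure of Frac(Zp) = Q_p. These axioms
   characterise (\bar Q_p, v_p, Z_p) up to isomorphism. *)
Definition vlim (Om : fieldType) (v : Om -> rat) (s : nat -> Om) (z : Om) :=
  forall k : rat, exists n0, forall n, (n0 <= n)%N -> s n = z \/ k <= v (s n - z).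

Definition vcauchy (Om : fieldType) (v : Om -> rat) (s : nat -> Om) :=
  forall k : rat, exists n0, forall m n, (n0 <= m)%N -> (n0 <= n)%N ->
    s m = s n \/ k <= v (s m - s n).

Definition padic_closure (p : nat) (Om : closedFieldType) (v : Om -> rat)
    (Zp : Om -> Prop) : Prop :=
  [/\
      (forall x y, x != 0 -> y != 0 -> v (x * y) = v x + v y),
      (forall x y, x != 0 -> y != 0 -> x + y != 0 ->
          Num.min (v x) (v y) <= v (x + y)),
      (forall n : nat, (0 < n)%N -> n%:R != 0 :> Om),
      v p%:R = 1 &
      (forall n : nat, (0 < n)%N -> coprime n p -> v n%:R = 0)] /\
  [/\
      Zp 0, Zp 1,
      (forall x y, Zp x -> Zp y -> Zp (x - y)),
      (forall x y, Zp x -> Zp y -> Zp (x * y)) &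
      (forall x, Zp x -> x != 0 -> 0 <= v x)] /\
  [/\
      (forall x k, Zp x -> exists m : int, x = m%:~R \/ k <= v (x - m%:~R)),
      (forall s, (forall n, Zp (s n)) -> vcauchy v s ->
          exists2 z, Zp z & vlim v s z) &
      (forall x, exists2 P : {poly Om}, P != 0 /\ (forall i, Zp P`_i)
                   & root P x)].

Definition in_Zpx (Om : fieldType) (Zp : Om -> Prop) (P : {poly Om}) : Prop :=
  forall i, Zp P`_i.

Definition irreducible_Zpx (Om : fieldType) (Zp : Om -> Prop) (P : {poly Om}) :=
  in_Zpx Zp P /\ ~ (size P = 1%N /\ Zp (P`_0)^-1) /\ P != 0 /\
  forall A B, in_Zpx Zp A -> in_Zpx Zp B -> P = A * B ->
    (size A = 1%N /\ Zp (A`_0)^-1) \/ (size B = 1%N /\ Zp (B`_0)^-1).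

Definition vpoly (Om : fieldType) (v : Om -> rat) (b : {poly Om}) : rat :=
  \big[Num.min/ v (lead_coef b)]_(c <- b | c != 0) v c.

Definition uP (Om : fieldType) (v : Om -> rat) (b : seq {poly Om}) (i : nat)
  : option rat :=
  if b`_i == 0 then None else Some (vpoly v b`_i).

Definition redp (q : nat) (P : {poly int}) : {poly 'F_q} :=
  map_poly (fun c : int => c%:~R) P.

Definition squarefree_poly (F : fieldType) (P : {poly F}) : Prop :=
  P != 0 /\ forall d : {poly F}, d * d %| P -> (size d <= 1)%N.

Definition toOm (Om : nzRingType) (P : {poly int}) : {poly Om} :=
  map_poly (fun c : int => c%:~R) P.

(* Modulo p, f = g^l H with H coprime to g, and g = phi h in Z_p[x] with
   phi, h coprime modulo p since g is squarefree modulo p.  Reducing the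
   g-expansion of f modulo N and p (resp. the phi-expansion modulo p), the
   uniqueness of expansions with respect to a monic polynomial shows that the
   first l digits vanish and the l-th does not: the points left of abscissa l
   lie strictly above the axis, (l, 0) is a point, and all ordinates are
   nonnegative, so N^- has length l.  For (2), a Bezout relation
   u phi + w h = 1 mod p evaluated at the integral root alpha shows that
   h(alpha) is a unit once v(phi(alpha)) > 0, hence v(g(alpha)) = v(phi(alpha)). *)

From HB Require Import structures.
From mathcomp Require Import all_boot all_order all_algebra.
From mathcomp Require Import ring lra.
From Stdlib Require Import ClassicalEpsilon.
Import Order.TTheory GRing.Theory Num.Theory.
Set Implicit Arguments. Unset Strict Implicit.
Local Open Scope ring_scope.

Section Interpolation.
Variables (a1 a2 b1 b2 : rat).
Hypothesis lt_a12 : a1 < a2.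
Let interp x := ((a2 - x) * b1 + (x - a1) * b2) / (a2 - a1).

Lemma interp_ge_l x : a1 <= x <= a2 -> b1 <= b2 -> b1 <= interp x.
Proof. by move=> /andP[h1 h2] hb; rewrite /interp ler_pdivlMr ?subr_gt0 //; nra. Qed.

Lemma interp_ge_r x : a1 <= x <= a2 -> b2 <= b1 -> b2 <= interp x.
Proof. by move=> /andP[h1 h2] hb; rewrite /interp ler_pdivlMr ?subr_gt0 //; nra. Qed.

Lemma interp_ge0 x : a1 <= x <= a2 -> 0 <= b1 -> 0 <= b2 -> 0 <= interp x.
Proof.
move=> /andP[h1 h2] hb1 hb2; rewrite /interp divr_ge0 ?subr_ge0 ?(ltW lt_a12) //.
by rewrite addr_ge0 // mulr_ge0 // subr_ge0.
Qed.

Lemma interp_le x y : b1 <= b2 -> x <= y -> interp x <= interp y.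
Proof.
move=> hb hxy; rewrite /interp ler_pM2r ?invr_gt0 ?subr_gt0 //.
have : 0 <= (y - x) * (b2 - b1) by rewrite mulr_ge0 ?subr_ge0.
nra.
Qed.

Lemma interp_lt x y : b2 < b1 -> x < y -> interp y < interp x.
Proof.
move=> hb hxy; rewrite /interp ltr_pM2r ?invr_gt0 ?subr_gt0 //.
have : 0 < (y - x) * (b1 - b2) by rewrite mulr_gt0 ?subr_gt0.
nra.
Qed.

Lemma interp_le_r x : b1 = 0 -> 0 <= b2 -> x <= a2 -> interp x <= b2.
Proof. by move=> e hb hx; rewrite /interp e ler_pdivrMr ?subr_gt0 //; nra. Qed.

Lemma interp_lt_l x : b2 = 0 -> 0 < b1 -> a1 < x -> interp x < b1.
Proof. by move=> e hb hx; rewrite /interp e ltr_pdivrMr ?subr_gt0 //; nra. Qed.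

End Interpolation.

Lemma segvalE (P Q : nat * rat) x : (P.1 < Q.1)%N ->
  segval P Q x = ((Q.1%:R - x) * P.2 + (x - P.1%:R) * Q.2) / (Q.1%:R - P.1%:R).
Proof. by move=> h; rewrite /segval ifF // ltn_eqF. Qed.

Lemma segval_vert (P Q : nat * rat) x : P.1 = Q.1 -> segval P Q x = P.2.
Proof. by move=> h; rewrite /segval h eqxx. Qed.

Lemma ltn_between (m n : nat) (x : rat) :
  m%:R <= x -> x <= n%:R -> m != n -> (m < n)%N.
Proof. by move=> h1 h2 ne; rewrite ltn_neqAle ne -(ler_nat rat) (le_trans h1 h2). Qed.

Section NegpartAtVertex.
Variables (pts : seq (nat * rat)) (l : nat).
Hypothesis vertex_l : (l, 0) \in pts.
Hypothesis pts_ge0 : forall P, P \in pts -> 0 <= P.2.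
Hypothesis pts_gt0 : forall P, P \in pts -> (P.1 < l)%N -> 0 < P.2.

Lemma on_hull_vertex : on_hull pts l%:R 0.
Proof.
split; first by exists (l, 0), (l, 0); split => //=; rewrite ?lexx // segval_vert.
move=> [p1 p2] [q1 q2] hP hQ /andP[h1 h2] /=.
have [e|ne] := eqVneq p1 q1; first by rewrite segval_vert //; exact: (pts_ge0 hP).
have hlt : (p1 < q1)%N := ltn_between h1 h2 ne.
rewrite segvalE //= interp_ge0 ?ltr_nat ?h1 ?h2 //; [exact: (pts_ge0 hP) | exact: (pts_ge0 hQ)].
Qed.

Let seg_to_vertex R x : R \in pts -> (R.1 < l)%N -> R.1%:R < x <= l%:R ->
  segval R (l, 0) x < R.2.
Proof.
move=> hR hl /andP[h1 h2]; rewrite segvalE //=.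
by apply: interp_lt_l => //; [rewrite ltr_nat | exact: (pts_gt0 hR)].
Qed.

Let seg_from_vertex R x : R \in pts -> (l < R.1)%N -> l%:R <= x <= R.1%:R ->
  segval (l, 0) R x <= R.2.
Proof.
move=> hR hl /andP[h1 h2]; rewrite segvalE //=.
by apply: interp_le_r => //; [rewrite ltr_nat | exact: (pts_ge0 hR)].
Qed.

Lemma on_hull_decr x1 x2 y1 y2 : on_hull pts x1 y1 -> on_hull pts x2 y2 ->
  x1 < x2 -> x2 <= l%:R -> y2 < y1.
Proof.
move=> [[[p1 p2] [[q1 q2] [hP hQ /andP[h1 h2] ->]]] _] [_ low2] hx hx2.
have below R : R \in pts -> (R.1 < l)%N -> R.1%:R < x2 -> y2 < R.2.
  move=> hR hRl hRx; apply: (le_lt_trans (low2 _ _ hR vertex_l _)).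
    by rewrite /= hx2 ltW.
  by apply: seg_to_vertex; rewrite ?hRx.
have p1_lt_x2 : p1%:R < x2 := le_lt_trans h1 hx.
have below_P : y2 < p2.
  by apply: (below _ hP) => //=; rewrite -(ltr_nat rat) (lt_le_trans p1_lt_x2).
have [e|ne] := eqVneq p1 q1; first by rewrite segval_vert.
have hlt : (p1 < q1)%N := ltn_between h1 h2 ne.
rewrite segvalE //=; have [hb|hb] := leP p2 q2.
  by rewrite (lt_le_trans below_P) // interp_ge_l ?ltr_nat ?h1 ?h2.
have [hq|hq] := leP x2 q1%:R.
  apply: (le_lt_trans (low2 _ _ hP hQ _)); first by rewrite /= hq ltW.
  by rewrite segvalE //= interp_lt ?ltr_nat.
have below_Q : y2 < q2.
  by apply: (below _ hQ) => //=; rewrite -(ltr_nat rat) (lt_le_trans hq hx2).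
by rewrite (lt_le_trans below_Q) // interp_ge_r ?ltr_nat ?h1 ?h2 ?(ltW hb).
Qed.

Lemma on_hull_nondecr x1 x2 y1 y2 : on_hull pts x1 y1 -> on_hull pts x2 y2 ->
  l%:R <= x1 -> x1 < x2 -> y1 <= y2.
Proof.
move=> [_ low1] [[[p1 p2] [[q1 q2] [hP hQ /andP[h1 h2] ->]]] _] hx hx12.
have below R : R \in pts -> (l < R.1)%N -> x1 <= R.1%:R -> y1 <= R.2.
  move=> hR hlR hxR; apply: (le_trans (low1 _ _ vertex_l hR _)).
    by rewrite /= hx hxR.
  by apply: seg_from_vertex; rewrite ?hx.
have x1_le_q1 : x1 <= q1%:R := le_trans (ltW hx12) h2.
have hq1 : (l < q1)%N by rewrite -(ltr_nat rat) (le_lt_trans hx) // (lt_le_trans hx12).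
have below_Q : y1 <= q2 := below _ hQ hq1 x1_le_q1.
have [e|ne] := eqVneq p1 q1.
  by rewrite segval_vert //; apply: (below _ hP); rewrite //= e.
have hlt : (p1 < q1)%N := ltn_between h1 h2 ne.
rewrite segvalE //=; have [hb|hb] := leP q2 p2.
  by rewrite (le_trans below_Q) // interp_ge_r ?ltr_nat ?h1 ?h2.
have [hp|hp] := leP p1%:R x1.
  apply: (le_trans (low1 _ _ hP hQ _)); first by rewrite /= hp x1_le_q1.
  by rewrite segvalE //= interp_le ?ltr_nat ?(ltW hb) ?(ltW hx12).
have hp1 : (l < p1)%N by rewrite -(ltr_nat rat) (le_lt_trans hx hp).
by rewrite (le_trans (below _ hP hp1 (ltW hp))) // interp_ge_l ?ltr_nat ?h1 ?h2 ?(ltW hb).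
Qed.

Lemma negpart_length_vertex : negpart_length pts l%:R.
Proof.
split; first by exists 0; exact: on_hull_vertex.
by split; [exact: on_hull_decr | exact: on_hull_nondecr].
Qed.

End NegpartAtVertex.

Lemma pts_ofP n (u : nat -> option rat) P :
  P \in pts_of n u -> (P.1 < n)%N /\ u P.1 = Some P.2.
Proof.
rewrite /pts_of mem_pmap => /mapP[k]; rewrite mem_iota add0n => hk.
by case e: (u k) => [r|] //= [->].
Qed.

Lemma mem_pts_of n (u : nat -> option rat) k y :
  (k < n)%N -> u k = Some y -> (k, y) \in pts_of n u.
Proof.
move=> hk e; rewrite /pts_of mem_pmap; apply/mapP; exists k; first by rewrite mem_iota.
by rewrite e.
Qed.

Lemma size_map_poly_le (R S : nzRingType) (f : R -> S) (P : {poly R}) :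
  (size (map_poly f P) <= size P)%N.
Proof. exact: size_poly. Qed.

Lemma monic_cofactor_eq0 (R : nzRingType) (G c Q : {poly R}) :
  G \is monic -> (size c < size G)%N -> c = G * Q -> Q = 0.
Proof.
move=> mG hc e; apply/eqP/negPn/negP => nQ; move: hc.
by rewrite e size_monicM // -(prednK (etrans (size_poly_gt0 Q) nQ)) addnS ltnNge leq_addr.
Qed.

(* Uniqueness of G-adic expansions for monic G. *)
Lemma expansion_dvd_exp (R : comNzRingType) (G : {poly R}) (c : seq {poly R}) :
  G \is monic -> (forall k, (k < size c)%N -> (size (c`_k)%R < size G)%N) ->
  forall l H, \sum_(k < size c) c`_k * G ^+ k = G ^+ l * H ->
  (forall k, (k < l)%N -> c`_k = 0) /\ exists T, H = c`_l + G * T.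
Proof.
move=> mG; have mGl n : G ^+ n \is monic by exact: monic_exp.
elim: c => [|c0 c IH] hc l H.
  rewrite big_ord0 => e; have H0 : H = 0.
    apply: (monic_cofactor_eq0 (mGl l) _ e).
    by rewrite size_poly0 size_poly_gt0 monic_neq0.
  by split=> [k _|]; [rewrite nth_nil | exists 0; rewrite H0 nth_nil mulr0 addr0].
rewrite big_ord_recl /= expr0 mulr1.
under eq_bigr => k _ do rewrite /bump /= add1n exprS mulrCA.
rewrite -mulr_sumr; set S := \sum_(_ < _) _.
case: l => [|l] e; first by split=> //; exists S; rewrite -[H]mul1r -(expr0 G) -e.
have c0E : c0 = G * (G ^+ l * H - S) by rewrite mulrBr mulrA -exprS -e addrK.
have S_eq := monic_cofactor_eq0 mG (hc 0%N isT) c0E.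
have hc' k : (k < size c)%N -> (size (c`_k)%R < size G)%N by move=> hk; exact: (hc k.+1).
have SE : S = G ^+ l * H by apply/eqP; rewrite -subr_eq0 -opprB S_eq oppr0.
have [zero_c [T ->]] := IH hc' l H SE.
split; last by exists T.
by case=> [|k] hk //=; [rewrite c0E S_eq mulr0 | exact: zero_c].
Qed.

Lemma intr_eq0_dvd (R : nzRingType) (d : nat) :
  (forall n : nat, ((n%:R : R) == 0) = (d %| n)%N) ->
  forall z : int, ((z%:~R : R) == 0) = (d %| `|z|)%N.
Proof. by move=> hd [n|n]; rewrite ?NegzE ?intrN ?oppr_eq0 /= hd. Qed.

(* Both [vpoly] and [vN_poly] are instances of [mincoef]. *)
Section MinOverCoefficients.
Variables (R : nzRingType) (w : R -> rat) (P : {poly R}).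
Let mincoef := \big[Num.min/w (lead_coef P)]_(c <- P | c != 0) w c.

Lemma mincoef_le i : P`_i != 0 -> mincoef <= w P`_i.
Proof.
move=> nPi; apply: ge_bigmin_seq => //; apply: mem_nth.
by rewrite ltnNge; apply: contra nPi => hi; rewrite nth_default.
Qed.

Let lead_nonzero_coef : P != 0 -> exists2 i, P`_i != 0 & lead_coef P = P`_i.
Proof. by move=> nP; exists (size P).-1; rewrite -?lead_coefE ?lead_coef_eq0. Qed.

Lemma mincoef_ge t : P != 0 -> (forall i, P`_i != 0 -> t <= w P`_i) -> t <= mincoef.
Proof.
move=> /lead_nonzero_coef[j nPj eP] ht; rewrite /mincoef eP big_seq_cond.
by apply: le_bigmin => [|c /andP[/(nthP 0)[i _ <-]]]; exact: ht.
Qed.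

Lemma mincoef_gt t : P != 0 -> (forall i, P`_i != 0 -> t < w P`_i) -> t < mincoef.
Proof.
move=> /lead_nonzero_coef[j nPj eP] ht; rewrite /mincoef eP big_seq_cond.
by apply: lt_bigmin => [|c /andP[/(nthP 0)[i _ <-]]]; exact: ht.
Qed.

End MinOverCoefficients.

Lemma coprimep_digit_neq0 (F : fieldType) (G Q c T : {poly F}) :
  (1 < size G)%N -> coprimep G Q -> Q = c + G * T -> c != 0.
Proof.
move=> sG + QE; apply: contraTneq => c0.
by rewrite QE c0 add0r coprimepMr coprimepp negb_and neq_ltn sG orbT.
Qed.

Lemma squarefree_coprimep (F : fieldType) (A B : {poly F}) :
  squarefree_poly (A * B) -> coprimep A B.
Proof.
case=> nAB sqf; have dvd_sq : gcdp A B * gcdp A B %| A * B.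
  by rewrite dvdp_mul ?dvdp_gcdl ?dvdp_gcdr.
rewrite coprimep_def eqn_leq sqf //= size_poly_gt0 gcdp_eq0 negb_and.
by apply/orP; left; apply: contraNneq nAB => ->; rewrite mul0r.
Qed.

Section PadicClosure.
Variables (p : nat) (Om : closedFieldType) (v : Om -> rat) (Zp : Om -> Prop).
Hypothesis p_prime : prime p.
Hypothesis HOm : padic_closure p v Zp.

Let vM : forall x y, x != 0 -> y != 0 -> v (x * y) = v x + v y.
Proof. by case: HOm => -[]. Qed.
Let vD : forall x y, x != 0 -> y != 0 -> x + y != 0 -> Num.min (v x) (v y) <= v (x + y).
Proof. by case: HOm => -[]. Qed.
Let natr_neq0 : forall n : nat, (0 < n)%N -> n%:R != 0 :> Om.
Proof. by case: HOm => -[]. Qed.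
Let v_coprime : forall n : nat, (0 < n)%N -> coprime n p -> v n%:R = 0.
Proof. by case: HOm => -[]. Qed.
Let v_p : v p%:R = 1.
Proof. by case: HOm => -[]. Qed.
Let Zp0 : Zp 0. Proof. by case: HOm => _ [[]]. Qed.
Let Zp1 : Zp 1. Proof. by case: HOm => _ [[]]. Qed.
Let ZpB : forall x y, Zp x -> Zp y -> Zp (x - y). Proof. by case: HOm => _ [[]]. Qed.
Let ZpM : forall x y, Zp x -> Zp y -> Zp (x * y). Proof. by case: HOm => _ [[]]. Qed.
Let Zp_v_ge0 : forall x, Zp x -> x != 0 -> 0 <= v x. Proof. by case: HOm => _ [[]]. Qed.
Let Zp_int_dense : forall x k, Zp x -> exists m : int, x = m%:~R \/ k <= v (x - m%:~R).
Proof. by case: HOm => _ [_ []]. Qed.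

Lemma ZpN x : Zp x -> Zp (- x).
Proof. by move=> hx; rewrite -sub0r; apply: ZpB Zp0 hx. Qed.

Lemma ZpD x y : Zp x -> Zp y -> Zp (x + y).
Proof. by move=> hx hy; rewrite -[y]opprK; apply: ZpB => //; apply: ZpN. Qed.

Lemma Zp_int (z : int) : Zp z%:~R.
Proof.
have Zp_nat (n : nat) : Zp n%:R.
  elim: n => [|n IH]; first by rewrite mulr0n; apply: Zp0.
  by rewrite -natr1; apply: ZpD IH Zp1.
by case: z => n; rewrite ?NegzE ?intrN; [|apply: ZpN]; apply: Zp_nat.
Qed.

Lemma v1 : v 1 = 0.
Proof. by have := vM (oner_neq0 Om) (oner_neq0 Om); rewrite mulr1 => h; lra. Qed.

Lemma v_opp x : v (- x) = v x.
Proof.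
have [->|nx] := eqVneq x 0; first by rewrite oppr0.
have n1 : (-1 : Om) != 0 by rewrite oppr_eq0 oner_neq0.
have vN1 : v (-1) = 0 by have := vM n1 n1; rewrite mulrNN mulr1 v1 => h; lra.
by rewrite -mulN1r vM // vN1 add0r.
Qed.

Lemma vX x n : x != 0 -> v (x ^+ n) = n%:R * v x.
Proof.
move=> nx; elim: n => [|n IH]; first by rewrite expr0 v1 mul0r.
by rewrite exprS vM ?expf_neq0 // IH -natr1; ring.
Qed.

(* v 0 is junk; these predicates give 0 the valuation +oo. *)
Definition vgt (t : rat) (x : Om) := (x == 0) || (t < v x).
Definition vge (t : rat) (x : Om) := (x == 0) || (t <= v x).

Lemma vgtD t x y : vgt t x -> vgt t y -> vgt t (x + y).
Proof.
rewrite /vgt; have [->|nx] := eqVneq x 0; first by rewrite add0r.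
have [->|ny] := eqVneq y 0; first by rewrite addr0 (negbTE nx).
case: (eqVneq (x + y) 0) => //= nxy hx hy.
by apply: lt_le_trans (vD nx ny nxy); rewrite lt_min hx hy.
Qed.

Lemma vgeD t x y : vge t x -> vge t y -> vge t (x + y).
Proof.
rewrite /vge; have [->|nx] := eqVneq x 0; first by rewrite add0r.
have [->|ny] := eqVneq y 0; first by rewrite addr0 (negbTE nx).
case: (eqVneq (x + y) 0) => //= nxy hx hy.
by apply: le_trans (vD nx ny nxy); rewrite le_min hx hy.
Qed.

Lemma vgtN t x : vgt t x -> vgt t (- x).
Proof. by rewrite /vgt oppr_eq0 v_opp. Qed.

Lemma vgeM s t x y : vge s x -> vge t y -> vge (s + t) (x * y).
Proof.
rewrite /vge mulf_eq0; case: (eqVneq x 0) => //= nx; case: (eqVneq y 0) => //= ny hx hy.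
by rewrite vM // lerD.
Qed.

Lemma vgeMgt s t x y : vge s x -> vgt t y -> vgt (s + t) (x * y).
Proof.
rewrite /vge /vgt mulf_eq0; case: (eqVneq x 0) => //= nx; case: (eqVneq y 0) => //= ny hx hy.
by rewrite vM // ler_ltD.
Qed.

Lemma vge_sum t (I : Type) (r : seq I) (P : pred I) (F : I -> Om) :
  (forall i, P i -> vge t (F i)) -> vge t (\sum_(i <- r | P i) F i).
Proof.
move=> hF; apply: (big_rec (vge t)); first by rewrite /vge eqxx.
by move=> i y Pi hy; apply: vgeD => //; apply: hF.
Qed.

Lemma vgt_sum t (I : Type) (r : seq I) (P : pred I) (F : I -> Om) :
  (forall i, P i -> vgt t (F i)) -> vgt t (\sum_(i <- r | P i) F i).
Proof.
move=> hF; apply: (big_rec (vgt t)); first by rewrite /vgt eqxx.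
by move=> i y Pi hy; apply: vgtD => //; apply: hF.
Qed.

Lemma Zp_vge0 x : Zp x -> vge 0 x.
Proof. by move=> hx; rewrite /vge; case: (eqVneq x 0) => //= nx; apply: Zp_v_ge0. Qed.

Lemma vge0X x n : vge 0 x -> vge 0 (x ^+ n).
Proof.
move=> hx; elim: n => [|n IH]; first by rewrite /vge expr0 v1 lexx orbT.
by rewrite exprS -[0]addr0 vgeM.
Qed.

Lemma vgt0_int (z : int) : vgt 0 z%:~R = (p %| `|z|)%N.
Proof.
suff vgt0_nat (n : nat) : vgt 0 n%:R = (p %| n)%N.
  by case: z => n; rewrite ?NegzE ?intrN /vgt ?oppr_eq0 ?v_opp -/(vgt 0 _) vgt0_nat.
apply/idP/idP.
  rewrite /vgt; have [->|n_gt0] := posnP n; first by rewrite dvdn0.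
  rewrite (negbTE (natr_neq0 n_gt0)) /=; apply: contraLR => ndvd.
  by rewrite v_coprime ?ltxx // coprime_sym prime_coprime.
case/dvdnP=> q ->; rewrite natrM -[0]addr0; apply: vgeMgt.
  exact: (Zp_vge0 (Zp_int q)).
by rewrite /vgt v_p ltr01 orbT.
Qed.

Lemma intr_Fp_eq0 (z : int) : ((z%:~R : 'F_p) == 0) = vgt 0 z%:~R.
Proof.
rewrite vgt0_int; apply: intr_eq0_dvd => n.
by rewrite (dvdn_pcharf (pchar_Fp p_prime)).
Qed.

(* The residue map Z_p -> F_p: reduce an integer m with v (x - m) > 0, which
   exists since Z is dense in Z_p. *)
Definition rep (x : Om) : int :=
  epsilon (inhabits 0%Z) (fun m : int => vgt 0 (x - m%:~R)).
Definition res (x : Om) : 'F_p := (rep x)%:~R.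

Lemma rep_spec x : Zp x -> vgt 0 (x - (rep x)%:~R).
Proof.
move=> hx; apply: (epsilon_spec (inhabits 0%Z) (fun m : int => vgt 0 (x - m%:~R))).
have [m [e|h]] := Zp_int_dense 1 hx; exists m; first by rewrite /vgt e subrr eqxx.
by rewrite /vgt (lt_le_trans _ h) ?orbT.
Qed.

Lemma res_eq x (m : int) : Zp x -> vgt 0 (x - m%:~R) -> res x = m%:~R.
Proof.
move=> hx hm; apply/eqP; rewrite -subr_eq0 -intrB intr_Fp_eq0.
have -> : (rep x - m)%:~R = (x - m%:~R) - (x - (rep x)%:~R) :> Om by rewrite intrB; ring.
by rewrite -[0]addr0; apply: vgtD => //; apply/vgtN/rep_spec.
Qed.

Lemma res_int (z : int) : res z%:~R = z%:~R.
Proof. by apply: res_eq; [exact: Zp_int | rewrite /vgt subrr eqxx]. Qed.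

Lemma res0 : res 0 = 0. Proof. exact: (res_int 0). Qed.
Lemma res1 : res 1 = 1. Proof. exact: (res_int 1). Qed.

Lemma resD x y : Zp x -> Zp y -> res (x + y) = res x + res y.
Proof.
move=> hx hy; rewrite /res -intrD; apply: res_eq; first exact: ZpD.
have -> : x + y - (rep x + rep y)%:~R = (x - (rep x)%:~R) + (y - (rep y)%:~R).
  by rewrite intrD; ring.
by rewrite -[0]addr0; apply: vgtD; apply: rep_spec.
Qed.

Lemma resN x : Zp x -> res (- x) = - res x.
Proof. by move=> hx; apply/eqP; rewrite -subr_eq0 opprK -resD ?addNr ?res0 //; apply: ZpN. Qed.

Lemma resM x y : Zp x -> Zp y -> res (x * y) = res x * res y.
Proof.
move=> hx hy; rewrite /res -intrM; apply: res_eq; first exact: ZpM.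
have -> : x * y - (rep x * rep y)%:~R =
    x * (y - (rep y)%:~R) + (rep y)%:~R * (x - (rep x)%:~R) by rewrite intrM; ring.
rewrite -[0]addr0; apply: vgtD.
  exact: vgeMgt (Zp_vge0 hx) (rep_spec hy).
exact: vgeMgt (Zp_vge0 (Zp_int _)) (rep_spec hx).
Qed.

Lemma res_eq0 x : Zp x -> (res x == 0) = vgt 0 x.
Proof.
move=> hx; apply/idP/idP => [|h]; last by rewrite (res_eq (m := 0)) // subr0.
rewrite intr_Fp_eq0 => hr; have := vgtD (rep_spec hx) hr.
by rewrite subrK.
Qed.

Lemma Zp_sum (I : Type) (r : seq I) (P : pred I) (F : I -> Om) :
  (forall i, P i -> Zp (F i)) -> Zp (\sum_(i <- r | P i) F i).
Proof.
move=> hF; apply: (big_rec Zp) => [|i y Pi hy]; first exact: Zp0.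
by apply: ZpD => //; apply: hF.
Qed.

Lemma res_sum (I : Type) (r : seq I) (P : pred I) (F : I -> Om) :
  (forall i, P i -> Zp (F i)) ->
  res (\sum_(i <- r | P i) F i) = \sum_(i <- r | P i) res (F i).
Proof.
move=> hF; elim: r => [|x r IH]; first by rewrite !big_nil res0.
rewrite !big_cons; case: ifP => // Px.
by rewrite resD ?IH //; [apply: hF | apply: Zp_sum].
Qed.

Notation Zpx := (in_Zpx Zp).

Definition resp (P : {poly Om}) : {poly 'F_p} := map_poly res P.

Lemma coef_resp P i : (resp P)`_i = res P`_i.
Proof. by rewrite coef_map_id0 // res0. Qed.

Lemma Zpx0 : Zpx 0. Proof. by move=> i; rewrite coef0. Qed.
Lemma Zpx1 : Zpx 1. Proof. by move=> i; rewrite coef1; case: (i == 0%N). Qed.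

Lemma ZpxD P Q : Zpx P -> Zpx Q -> Zpx (P + Q).
Proof. by move=> hP hQ i; rewrite coefD; apply: ZpD. Qed.

Lemma ZpxN P : Zpx P -> Zpx (- P).
Proof. by move=> hP i; rewrite coefN; apply: ZpN. Qed.

Lemma ZpxM P Q : Zpx P -> Zpx Q -> Zpx (P * Q).
Proof. by move=> hP hQ i; rewrite coefM; apply: Zp_sum => j _; apply: ZpM. Qed.

Lemma ZpxX P n : Zpx P -> Zpx (P ^+ n).
Proof.
by move=> hP; elim: n => [|n IH]; [rewrite expr0; apply: Zpx1 | rewrite exprS; apply: ZpxM].
Qed.

Lemma Zpx_sum (I : Type) (r : seq I) (P : pred I) (F : I -> {poly Om}) :
  (forall i, P i -> Zpx (F i)) -> Zpx (\sum_(i <- r | P i) F i).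
Proof.
move=> hF; apply: (big_rec Zpx) => [|i Q Pi hQ]; first exact: Zpx0.
by apply: ZpxD => //; apply: hF.
Qed.

Lemma respD P Q : Zpx P -> Zpx Q -> resp (P + Q) = resp P + resp Q.
Proof. by move=> hP hQ; apply/polyP => i; rewrite coefD !coef_resp coefD resD. Qed.

Lemma respN P : Zpx P -> resp (- P) = - resp P.
Proof. by move=> hP; apply/polyP => i; rewrite coefN !coef_resp coefN resN. Qed.

Lemma respM P Q : Zpx P -> Zpx Q -> resp (P * Q) = resp P * resp Q.
Proof.
move=> hP hQ; apply/polyP => i; rewrite coef_resp !coefM res_sum => [|j _]; last exact: ZpM.
by apply: eq_bigr => j _; rewrite resM // !coef_resp.
Qed.

Lemma resp1 : resp 1 = 1.
Proof. by apply/polyP => i; rewrite coef_resp !coef1; case: (i == 0%N); rewrite ?res1 ?res0. Qed.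

Lemma respX P n : Zpx P -> resp (P ^+ n) = resp P ^+ n.
Proof.
move=> hP; elim: n => [|n IH]; first by rewrite !expr0 resp1.
by rewrite !exprS respM ?IH //; apply: ZpxX.
Qed.

Lemma resp_sum (I : Type) (r : seq I) (P : pred I) (F : I -> {poly Om}) :
  (forall i, P i -> Zpx (F i)) ->
  resp (\sum_(i <- r | P i) F i) = \sum_(i <- r | P i) resp (F i).
Proof.
move=> hF; elim: r => [|x r IH].
  by rewrite !big_nil; apply/polyP => i; rewrite coef_resp !coef0 res0.
rewrite !big_cons; case: ifP => // Px.
by rewrite respD ?IH //; [apply: hF | apply: Zpx_sum].
Qed.

Lemma Zpx_toOm (P : {poly int}) : Zpx (toOm Om P).
Proof. by move=> i; rewrite coef_map_id0 //; apply: Zp_int. Qed.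

Lemma resp_toOm (P : {poly int}) : resp (toOm Om P) = redp p P.
Proof. by apply/polyP => i; rewrite coef_resp !coef_map_id0 // res_int. Qed.

Definition liftp (q : {poly 'F_p}) : {poly Om} :=
  map_poly (fun y : 'F_p => (y : nat)%:R) q.

Lemma Zpx_lift q : Zpx (liftp q).
Proof. by move=> i; rewrite coef_map_id0 //; apply: (Zp_int (Posz _)). Qed.

Lemma resp_lift q : resp (liftp q) = q.
Proof.
by apply/polyP => i; rewrite coef_resp coef_map_id0 // (res_int (Posz _)) -pmulrn natr_Zp.
Qed.

Lemma vpoly_ge0 B : Zpx B -> B != 0 -> 0 <= vpoly v B.
Proof. by move=> hB nB; apply: mincoef_ge => // i; apply: Zp_v_ge0. Qed.

Lemma vpoly_gt0 B : Zpx B -> B != 0 -> resp B = 0 -> 0 < vpoly v B.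
Proof.
move=> hB nB r0; apply: mincoef_gt => // i nBi.
have : vgt 0 B`_i by rewrite -res_eq0 // -coef_resp r0 coef0.
by rewrite /vgt (negbTE nBi).
Qed.

Lemma vpoly_eq0 B : Zpx B -> resp B != 0 -> vpoly v B = 0.
Proof.
move=> hB nr; set i := (size (resp B)).-1.
have ri : res B`_i != 0 by rewrite -coef_resp -lead_coefE lead_coef_eq0.
have nBi : B`_i != 0 by apply: contraNneq ri => ->; rewrite res0.
have nB : B != 0 by apply: contraNneq nBi => ->; rewrite coef0.
have vBi : v B`_i <= 0 by move: ri; rewrite res_eq0 // /vgt (negbTE nBi) -leNgt.
by apply/eqP; rewrite eq_le vpoly_ge0 // andbT (le_trans (mincoef_le _ nBi)).
Qed.

Lemma resp_expansion_digits (F : {poly int}) phi b l (Q : {poly 'F_p}) :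
  phi \is monic -> (1 < size phi)%N -> Zpx phi -> (forall k, Zpx b`_k) ->
  is_expansion (toOm Om F) phi b ->
  redp p F = resp phi ^+ l * Q -> coprimep (resp phi) Q ->
  (forall k, (k < l)%N -> resp b`_k = 0) /\ resp b`_l != 0.
Proof.
move=> mphi sphi Zphi Zb [bE b_size] FE cop.
have l1 : res (lead_coef phi) != 0 by rewrite (eqP mphi) res1 oner_neq0.
have mG : resp phi \is monic by rewrite monicE lead_coef_map_id0 ?res0 // (eqP mphi) res1.
have sG : size (resp phi) = size phi by rewrite size_map_poly_id0 ?res0.
have respb k : (map resp b)`_k = resp b`_k.
  have [hk|hk] := ltnP k (size b); first by rewrite (nth_map 0).
  by rewrite !nth_default ?size_map // /resp map_poly0.
have redE : \sum_(k < size (map resp b)) (map resp b)`_k * resp phi ^+ k =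
    resp phi ^+ l * Q.
  rewrite size_map -FE -resp_toOm bE resp_sum => [|k _]; last by apply/ZpxM/ZpxX.
  by apply: eq_bigr => k _; rewrite respb respM ?respX //; apply: ZpxX.
have [|zero_digits [T QE]] := expansion_dvd_exp mG _ redE.
  move=> k; rewrite size_map respb sG => hk.
  exact: leq_ltn_trans (size_map_poly_le _ _) (b_size k hk).
split=> [k hk|]; first by rewrite -respb zero_digits.
by rewrite -respb; apply: coprimep_digit_neq0 cop QE; rewrite sG.
Qed.

Lemma negpart_length_phi (F : {poly int}) phi b l (Q : {poly 'F_p}) :
  phi \is monic -> (1 < size phi)%N -> Zpx phi -> (forall k, Zpx b`_k) ->
  is_expansion (toOm Om F) phi b ->
  redp p F = resp phi ^+ l * Q -> coprimep (resp phi) Q ->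
  negpart_length (pts_of (size b) (uP v b)) l%:R.
Proof.
move=> mphi sphi Zphi Zb bE FE cop.
have [zero_digits digit_l] := resp_expansion_digits mphi sphi Zphi Zb bE FE cop.
have nbl : b`_l != 0 by apply: contraNneq digit_l => ->; rewrite /resp map_poly0.
have hl : (l < size b)%N by rewrite ltnNge; apply: contra nbl => h; rewrite nth_default.
apply: negpart_length_vertex => [|P|P].
- by apply: mem_pts_of; rewrite // /uP (negbTE nbl) vpoly_eq0.
- by case/pts_ofP=> _; rewrite /uP; case: eqP => // /eqP nb [<-]; apply: vpoly_ge0.
- case/pts_ofP=> _; rewrite /uP; case: eqP => // /eqP nb [<-] hk.
  by apply: vpoly_gt0 => //; apply: zero_digits.
Qed.

Lemma horner_vge0 P alpha : Zpx P -> vge 0 alpha -> vge 0 P.[alpha].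
Proof.
move=> hP ha; rewrite horner_coef; apply: vge_sum => i _.
by rewrite -[0]addr0; apply: vgeM; [apply: Zp_vge0 | apply: vge0X].
Qed.

Lemma horner_vgt0 P alpha : Zpx P -> resp P = 0 -> vge 0 alpha -> vgt 0 P.[alpha].
Proof.
move=> hP r0 ha; rewrite horner_coef; apply: vgt_sum => i _.
rewrite mulrC -[0]addr0; apply: vgeMgt; first exact: vge0X.
by rewrite -res_eq0 // -coef_resp r0 coef0.
Qed.

(* If v alpha < 0, the leading term alpha^n has strictly smaller valuation
   than all the others. *)
Lemma monic_root_vge0 P alpha : P \is monic -> Zpx P -> root P alpha -> vge 0 alpha.
Proof.
move=> mP ZP; rewrite /vge; case: (eqVneq alpha 0) => //= na r.
rewrite leNgt; apply/negP => v_neg.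
set n := (size P).-1.
have sP : size P = n.+1 by rewrite prednK // size_poly_gt0 monic_neq0.
move: r; rewrite /root horner_coef sP big_ord_recr /=.
have -> : P`_n = 1 by rewrite -(eqP mP) lead_coefE.
rewrite mul1r addr_eq0 => /eqP low_terms.
have : vgt (n%:R * v alpha) (- alpha ^+ n).
  rewrite -low_terms; apply: vgt_sum => i _; rewrite -[_ * v alpha]add0r.
  apply: vgeMgt; first exact: Zp_vge0.
  rewrite /vgt expf_eq0 (negbTE na) andbF /= vX //.
  have : (i%:R : rat) < n%:R by rewrite ltr_nat.
  nra.
by rewrite /vgt oppr_eq0 expf_eq0 (negbTE na) andbF /= v_opp vX // ltxx.
Qed.

(* A Bezout relation u P + w h = 1 mod p, evaluated at alpha, makes h(alpha)
   a unit as soon as P(alpha) lies in the maximal ideal. *)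
Lemma coprime_cofactor_v0 P h alpha :
  Zpx P -> Zpx h -> coprimep (resp P) (resp h) -> vge 0 alpha ->
  P.[alpha] != 0 -> 0 < v P.[alpha] -> h.[alpha] != 0 /\ v h.[alpha] = 0.
Proof.
move=> ZP Zh cop ha nP vP.
have [[u w] /= bezout] := Bezout_eq1_coprimepP _ _ cop.
pose E := liftp u * P + liftp w * h - 1.
have ZU : Zpx (liftp u * P) := ZpxM (Zpx_lift u) ZP.
have ZW : Zpx (liftp w * h) := ZpxM (Zpx_lift w) Zh.
have rE : resp E = 0.
  rewrite /E respD; [|exact: ZpxD ZU ZW | exact: ZpxN Zpx1].
  rewrite respN ?resp1; last exact: Zpx1.
  by rewrite respD // !respM ?resp_lift ?bezout ?subrr //; apply: Zpx_lift.
have vE : vgt 0 E.[alpha] := horner_vgt0 (ZpxD (ZpxD ZU ZW) (ZpxN Zpx1)) rE ha.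
have vU : vgt 0 ((liftp u).[alpha] * P.[alpha]).
  by rewrite -[0]addr0; apply: vgeMgt; [apply: horner_vge0 (Zpx_lift u) ha | rewrite /vgt vP orbT].
have vW : ~~ vgt 0 ((liftp w).[alpha] * h.[alpha]).
  apply/negP => vW; suff : vgt 0 1 by rewrite /vgt oner_eq0 v1 ltxx.
  have -> : 1 = (liftp u).[alpha] * P.[alpha] + (liftp w).[alpha] * h.[alpha] - E.[alpha].
    by rewrite /E !hornerE; ring.
  by apply: vgtD; [apply: vgtD | apply: vgtN].
move: vW; rewrite /vgt negb_or mulf_eq0 negb_or -leNgt => /andP[/andP[nw nh]].
move: (horner_vge0 (Zpx_lift w) ha) (horner_vge0 Zh ha).
rewrite /vge (negbTE nw) (negbTE nh) vM //= => vw vh vwh; split=> //.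
by apply/eqP; rewrite eq_le vh andbT; lra.
Qed.

Lemma irreducible_Zpx_size_gt1 phi :
  phi \is monic -> irreducible_Zpx Zp phi -> (1 < size phi)%N.
Proof.
move=> mphi [_ [not_unit [nphi _]]]; move: nphi; rewrite -size_poly_gt0.
case sphi: (size phi) => [|[|s]] // _; case: not_unit; split=> //.
have -> : phi`_0 = 1 by rewrite -(eqP mphi) lead_coefE sphi.
by rewrite invr1; exact: Zp1.
Qed.

Lemma negpart_length_phi_factor (F G H : {poly int}) phi h b l :
  phi \is monic -> irreducible_Zpx Zp phi -> Zpx h -> toOm Om G = phi * h ->
  squarefree_poly (redp p G) -> coprimep (redp p G) (redp p H) ->
  redp p F = redp p G ^+ l * redp p H ->
  (forall k, Zpx b`_k) -> is_expansion (toOm Om F) phi b ->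
  negpart_length (pts_of (size b) (uP v b)) l%:R.
Proof.
move=> mphi irr Zh GE sqf copH FE Zb bE; have Zphi : Zpx phi by case: irr.
have redGE : redp p G = resp phi * resp h by rewrite -resp_toOm GE respM.
move: sqf copH; rewrite redGE coprimepMl => /squarefree_coprimep cop_h /andP[cop_H _].
apply: (negpart_length_phi (Q := resp h ^+ l * redp p H) mphi _ Zphi Zb bE).
- exact: irreducible_Zpx_size_gt1.
- by rewrite FE redGE exprMn mulrA.
- by rewrite coprimepMr cop_H coprimep_expr.
Qed.

Lemma v_root_factor (F G : {poly int}) phi h alpha :
  F \is monic -> Zpx phi -> Zpx h -> toOm Om G = phi * h ->
  squarefree_poly (redp p G) -> root (toOm Om F) alpha ->
  phi.[alpha] != 0 -> 0 < v phi.[alpha] ->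
  (toOm Om G).[alpha] != 0 /\ v (toOm Om G).[alpha] = v phi.[alpha].
Proof.
move=> mF Zphi Zh GE sqf r nphi vphi.
have ha : vge 0 alpha := monic_root_vge0 (monic_map _ mF) (Zpx_toOm F) r.
have cop : coprimep (resp phi) (resp h).
  by apply: squarefree_coprimep; rewrite -respM // -GE resp_toOm.
have [nh vh] := coprime_cofactor_v0 Zphi Zh cop ha nphi vphi.
by rewrite GE hornerM mulf_neq0 // vM // vh addr0.
Qed.

End PadicClosure.

Lemma vN_eq0 N n : ~~ (N %| n)%N -> vN N n = 0%N.
Proof. by case: n => [|n] //=; rewrite /vN /= => /negbTE ->. Qed.

Lemma vN_gt0 N n : (0 < n)%N -> (N %| n)%N -> (0 < vN N n)%N.
Proof. by case: n => [|n] // _; rewrite /vN /= => ->. Qed.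

Lemma Fp_natr_eq0 (p N : nat) : prime p -> (p %| N)%N -> (N%:R : 'F_p) = 0.
Proof. by move=> p_prime /dvdnP[q ->]; rewrite natrM pchar_Fp_0 // mulr0. Qed.

Lemma map_intr_congr (R : nzRingType) (N : nat) (P Q : {poly int}) :
  (N%:R : R) = 0 -> (forall k, (N%:Z %| (P - Q)`_k)%Z) ->
  map_poly (intr : int -> R) P = map_poly intr Q.
Proof.
move=> N0 dvdPQ; apply/polyP => k; rewrite !coef_map_id0 //; apply/eqP.
rewrite -subr_eq0 -intrB -coefB; have /dvdzP[q ->] := dvdPQ k.
by rewrite intrM -pmulrn N0 mulr0.
Qed.

Lemma intr_expansion_digits (R : comNzRingType) (F G H : {poly int})
    (a : seq {poly int}) (l N : nat) :
  (N%:R : R) = 0 -> G \is monic -> is_expansion F G a ->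
  (forall k, (N%:Z %| (F - G ^+ l * H)`_k)%Z) ->
  (forall k, (k < l)%N -> map_poly (intr : int -> R) a`_k = 0) /\
  exists T, map_poly (intr : int -> R) H = map_poly intr a`_l + map_poly intr G * T.
Proof.
move=> N0 mG [aE a_size] FE; set red := map_poly (intr : int -> R).
have mredG : red G \is monic by apply: monic_map.
have sG : size (red G) = size G by rewrite size_map_poly_id0 // (eqP mG) oner_neq0.
have redn k : (map red a)`_k = red a`_k.
  have [hk|hk] := ltnP k (size a); first by rewrite (nth_map 0).
  by rewrite !nth_default ?size_map // /red map_poly0.
have redE : \sum_(k < size (map red a)) (map red a)`_k * red G ^+ k = red G ^+ l * red H.
  have -> : red G ^+ l * red H = red F by rewrite /red (map_intr_congr N0 FE) rmorphM rmorphXn.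
  rewrite size_map aE /red rmorph_sum.
  by apply: eq_bigr => k _; rewrite redn rmorphM rmorphXn.
have [|zero_digits [T HE]] := expansion_dvd_exp mredG _ redE.
  move=> k; rewrite size_map redn sG => hk.
  exact: leq_ltn_trans (size_map_poly_le _ _) (a_size k hk).
by split=> [k hk|]; [rewrite -redn zero_digits | exists T; rewrite -redn].
Qed.

Lemma expansion_digits_mod (F G H : {poly int}) (a : seq {poly int}) (l N p : nat) :
  prime p -> (p %| N)%N -> (1 < N)%N -> G \is monic -> (1 < size G)%N ->
  is_expansion F G a -> (forall k, (N%:Z %| (F - G ^+ l * H)`_k)%Z) ->
  coprimep (redp p G) (redp p H) ->
  (forall k j, (k < l)%N -> (N %| `|((a`_k)`_j)%R|)%N) /\
  exists j, ~~ (p %| `|((a`_l)`_j)%R|)%N.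
Proof.
move=> p_prime pN N_gt1 mG sG aE FE cop.
have NZ : (N%:R : 'Z_N) = 0 by apply: pchar_Zp.
have [zero_mod_N _] := intr_expansion_digits NZ mG aE FE.
have [_ [T HE]] := intr_expansion_digits (Fp_natr_eq0 p_prime pN) mG aE FE.
split=> [k j hk|].
  rewrite -(intr_eq0_dvd (R := 'Z_N)) => [|n]; last by rewrite -val_eqE /= val_Zp_nat.
  by rewrite -coef_map_id0 // zero_mod_N // coef0.
have : map_poly (intr : int -> 'F_p) a`_l != 0.
  by apply: coprimep_digit_neq0 cop HE; rewrite size_map_poly_id0 // (eqP mG) oner_neq0.
rewrite -lead_coef_eq0 lead_coefE coef_map_id0 // => nj.
exists (size (map_poly (intr : int -> 'F_p) a`_l)).-1.
by rewrite -(intr_eq0_dvd (R := 'F_p)) // => n; rewrite (dvdn_pcharf (pchar_Fp p_prime)).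
Qed.

Lemma negpart_length_g (F G H : {poly int}) (a : seq {poly int}) (l N p : nat) :
  prime p -> (p %| N)%N -> (1 < N)%N -> G \is monic -> (1 < size G)%N ->
  is_expansion F G a -> (forall k, (N%:Z %| (F - G ^+ l * H)`_k)%Z) ->
  coprimep (redp p G) (redp p H) ->
  negpart_length (pts_of (size a) (uN N a)) l%:R.
Proof.
move=> p_prime pN N_gt1 mG sG aE FE cop.
have [zero_digits [j nj]] := expansion_digits_mod p_prime pN N_gt1 mG sG aE FE cop.
pose w (c : int) : rat := (vN N `|c|)%:R.
have c_neq0 : (a`_l)`_j != 0 by apply: contraNneq nj => ->.
have al_neq0 : a`_l != 0 by apply: contraNneq c_neq0 => ->; rewrite coef0.
have hl : (l < size a)%N by rewrite ltnNge; apply: contra al_neq0 => h; rewrite nth_default.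
have vN_ge0 k : a`_k != 0 -> 0 <= vN_poly N a`_k.
  by move=> nk; apply: (@mincoef_ge _ w) => // *; apply: ler0n.
apply: negpart_length_vertex => [|P|P].
- apply: mem_pts_of; rewrite // /uN (negbTE al_neq0); congr Some.
  apply/eqP; rewrite eq_le vN_ge0 // andbT (le_trans (mincoef_le w c_neq0)) //.
  by rewrite /w vN_eq0 //; apply: contra nj; apply: dvdn_trans.
- by case/pts_ofP=> _; rewrite /uN; case: eqP => // /eqP nk [<-]; apply: vN_ge0.
- case/pts_ofP=> _; rewrite /uN; case: eqP => // /eqP nk [<-] hk.
  apply: (@mincoef_gt _ w) => // i nki.
  by rewrite ltr0n vN_gt0 ?absz_gt0 ?zero_digits.
Qed.

Lemma coprimep_redp_other_factors (q m : nat) (g : 'I_m -> {poly int})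
    (l : 'I_m -> nat) (i : 'I_m) :
  (forall j k, j != k -> coprimep (redp q (g j)) (redp q (g k))) ->
  coprimep (redp q (g i)) (redp q (\prod_(j < m | j != i) g j ^+ l j)).
Proof.
move=> cop; rewrite /redp rmorph_prod; apply: (big_rec (coprimep _)) => [|j P ji hP].
  exact: coprimep1.
by rewrite coprimepMr hP andbT rmorphXn coprimep_expr // cop // eq_sym.
Qed.

Unset Implicit Arguments.
Theorem lemma3p3
  (f : {poly int}) (N : nat) (m : nat)
  (g : 'I_m -> {poly int}) (l : 'I_m -> nat)
  (Hf_monic : f \is monic)
  (Hf_irr : irreducible_poly (map_poly (fun c : int => c%:~R) f : {poly rat}))
  (Hn : (1 < (size f).-1)%N)
  (HN : (1 < N)%N)
  (HNprimes : forall q : nat, prime q -> (q %| N)%N -> ((size f).-1 < q)%N)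
  (Hg : forall j, g j \is monic /\ (1 < size (g j))%N)
  (Hl : forall j, (0 < l j)%N)
  (Hcong : forall k : nat,
     (N%:Z %| (f - \prod_(j < m) g j ^+ l j)`_k)%Z)
  (Hsqf : forall q : nat, prime q -> (q %| N)%N ->
     forall j, squarefree_poly (redp q (g j)))
  (Hcop : forall q : nat, prime q -> (q %| N)%N ->
     forall j k, j != k -> coprimep (redp q (g j)) (redp q (g k)))
  (i : 'I_m) (a : seq {poly int})
  (Ha : is_expansion f (g i) a)
  (HvN : forall k j, vN_defined N (a`_k)`_j)
  (* p-adic data: (Om, v, Zp) models (\bar Q_p, v_p, Z_p) *)
  (p : nat) (Hp : prime p) (HpN : (p %| N)%N)
  (Om : closedFieldType) (v : Om -> rat) (Zp : Om -> Prop)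
  (HOm : padic_closure p v Zp)
  (phi : {poly Om}) (Hphi_monic : phi \is monic)
  (Hphi_irr : irreducible_Zpx Zp phi)
  (Hphi_dvd : exists2 h, in_Zpx Zp h & toOm Om (g i) = phi * h)
  (b : seq {poly Om}) (Hb_Zp : forall k, in_Zpx Zp b`_k)
  (Hb : is_expansion (toOm Om f) phi b) :
  (negpart_length (pts_of (size b) (uP v b)) (l i)%:R /\
   negpart_length (pts_of (size a) (uN N a)) (l i)%:R) /\
  (* (2) for every slope -lambda of N^-_phi(f) and every root alpha of f in
     \bar Q_p (alpha = iota_P(theta)) with v_p(phi(alpha)) = lambda,
     v_p(g(alpha)) = lambda, i.e. v_P(g(theta)) = e(P/p) lambda *)
  (forall lambda : rat, 0 < lambda ->
     is_slope (pts_of (size b) (uP v b)) (- lambda) ->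
     forall alpha : Om, root (toOm Om f) alpha ->
       phi.[alpha] != 0 -> v phi.[alpha] = lambda ->
       (toOm Om (g i)).[alpha] != 0 /\ v (toOm Om (g i)).[alpha] = lambda).
Proof.
have [mg sg] := Hg i.
set H := \prod_(j < m | j != i) g j ^+ l j.
have fE k : (N%:Z %| (f - g i ^+ l i * H)`_k)%Z by move: (Hcong k); rewrite (bigD1 i).
have copH : coprimep (redp p (g i)) (redp p H).
  exact: coprimep_redp_other_factors (Hcop p Hp HpN).
have fEp : redp p f = redp p (g i) ^+ l i * redp p H.
  by rewrite /redp (map_intr_congr (Fp_natr_eq0 Hp HpN) fE) rmorphM rmorphXn.
have [h Zh gE] := Hphi_dvd; have Zphi : in_Zpx Zp phi by case: Hphi_irr.
split; first split.
- exact: (negpart_length_phi_factor (F := f) (H := H) Hp HOm Hphi_monic Hphi_irr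
    Zh gE (Hsqf p Hp HpN i) copH fEp Hb_Zp Hb).
- exact: negpart_length_g Hp HpN HN mg sg Ha fE copH.
- move=> lambda lambda_gt0 _ alpha r nphi vphi; rewrite -vphi.
  apply: (v_root_factor (F := f) Hp HOm Hf_monic Zphi Zh gE (Hsqf p Hp HpN i) r nphi).
  by rewrite vphi.
Qed.
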